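(* Let $\Upsilon$ be a finite tree with vertex set $\mathbf{x}$ whose edges $e$ are labeled by odd integers $m_e\ge 1$. Then there exists a labeled oriented tree $\Gamma$ of Coxeter type with vertex set $\mathbf{x}$, which can moreover be chosen to be prime, whose associated Coxeter tree is $\Upsilon$. In particular, $G(\Gamma)$ maps onto the Coxeter group $W(\Upsilon)$ (via $x\mapsto x$).
   Context: A labeled oriented tree (LOT) $\Gamma$ is a finite tree with vertex set $\mathbf{x}$ whose edges are oriented and each edge is labeled by a (possibly empty) word $w$ in $\mathbf{x}^{\pm1}$; $e=(x\xrightarrow{w}y)$ denotes the edge from $x$ to $y$ labeled $w$. Its presentation is $P(\Gamma)=\langle \mathbf{x}\mid r_e\rangle$ with $r_e=xw(wy)^{-1}$, and $G(\Gamma)$ is the group it defines. $\Gamma$ is of Coxeter type if for every edge $e=(x\xrightarrow{w}y)$ every letter $z\ne x,y$ occurs in $w$ only with even exponents. For such $\Gamma$, each $r_e$ reduces, up to cyclic permutation, in $\langle\mathbf{x}\mid x^2, x\in\mathbf{x}\rangle$ to $(yx)^{m_e}$ with $m_e\ge1$ odd; the associated Coxeter tree is obtained from $\Gamma$ by erasing orientations and edge words and labeling each edge $e$ by $m_e$. For an edge-labeled graph $\Upsilon$ on $\mathbf{x}$, $W(\Upsilon)=\langle \mathbf{x}\mid x^2\ (x\in\mathbf{x}),\ (xy)^{m_e}\text{ for each edge }e=\{x,y\}\rangle$. A subLOT of $\Gamma$ is a subtree $\Gamma'$ such that all letters occurring in the labels of edges of $\Gamma'$ are vertices of $\Gamma'$;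 $\Gamma$ is prime if it has no proper subLOT, where proper means neither all of $\Gamma$ nor a single vertex. *)

From mathcomp Require Import all_boot.
Set Implicit Arguments. Unset Strict Implicit. Unset Printing Implicit Defensive.

Section LOT.
Variable V : finType.

(* A letter of a word in x^{+-1}: (generator, true = positive exponent). *)
Definition word := seq (V * bool).

(* A LOT: list of oriented labeled edges (x, w, y) = x --w--> y. *)
Definition LOT := seq (V * word * V).

(* An edge-labeled graph: list of edges ({a,b}, m). *)
Definition labgraph := seq (V * V * nat).

Definition lot_ends (G : LOT) : seq (V * V) := [seq (e.1.1, e.2) | e <- G].
Definition lab_ends (U : labgraph) : seq (V * V) := [seq (f.1.1, f.1.2) | f <- U].

Definition adj (es : seq (V * V)) : rel V :=
  fun a b => ((a, b) \in es) || ((b, a) \in es).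

Definition is_tree (es : seq (V * V)) : Prop :=
  0 < #|V| /\ size es = #|V|.-1 /\ forall a b : V, connect (adj es) a b.

Fixpoint runs (s : seq V) : seq (V * nat) :=
  match s with
  | [::] => [::]
  | a :: t =>
      match runs t with
      | (b, k) :: r => if a == b then (a, k.+1) :: r else (a, 1) :: (b, k) :: r
      | [::] => [:: (a, 1)]
      end
  end.

(* Coxeter type edge: every letter z <> x, y occurs in w only in syllables
   z^k with k even (the parity of the exponent sum of a syllable equals the
   parity of its length). *)
Definition coxeter_type_edge (e : V * word * V) : bool :=
  all (fun p : V * nat => (p.1 == e.1.1) || (p.1 == e.2) || ~~ odd p.2)
      (runs (map fst e.1.2)).

(* image of the relator r_e = x w y^{-1} w^{-1} in <x | x^2> (signs dropped) *)
Definition rel_letters (e : V * word * V) : seq V :=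
  e.1.1 :: map fst e.1.2 ++ e.2 :: rev (map fst e.1.2).

(* normal form in the free product of copies of Z/2 *)
Fixpoint zred (s : seq V) : seq V :=
  match s with
  | [::] => [::]
  | a :: t =>
      match zred t with
      | b :: u => if a == b then u else a :: b :: u
      | [::] => [:: a]
      end
  end.

Fixpoint cyc_aux (n : nat) (s : seq V) : seq V :=
  match n with
  | 0 => s
  | n'.+1 =>
      match s with
      | a :: (_ :: _) as t =>
          if a == last a t then cyc_aux n' (take (size t).-1 t) else s
      | _ => s
      end
  end.

(* cyclic reduction in <x | x^2, x in V> *)
Definition cycred (s : seq V) : seq V := let r := zred s in cyc_aux (size r) r.

Definition alt_pow (y x : V) (m : nat) : seq V := flatten (nseq m [:: y; x]).

Definition reduces_to (e : V * word * V) (m : nat) : Prop :=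
  exists k, rot k (cycred (rel_letters e)) = alt_pow e.2 e.1.1 m.

Definition coxeter_tree_of (G : LOT) (Ups : labgraph) : Prop :=
  (forall e, e \in G -> exists m,
       (((e.1.1, e.2, m) \in Ups) \/ ((e.2, e.1.1, m) \in Ups)) /\ reduces_to e m)
  /\ (forall f, f \in Ups -> exists e, e \in G /\
       ((e.1.1, e.2) = (f.1.1, f.1.2) \/ (e.1.1, e.2) = (f.1.2, f.1.1))).

(* subLOT with vertex set U: U nonempty, the subgraph of G spanned by U is
   connected (hence a subtree, G being a tree), and all letters in the labels
   of its edges lie in U. *)
Definition subLOT (G : LOT) (U : {set V}) : Prop :=
  U != set0 /\
  (forall a b, a \in U -> b \in U ->
     connect [rel c d | [&& c \in U, d \in U & adj (lot_ends G) c d]] a b) /\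
  (forall e, e \in G -> e.1.1 \in U -> e.2 \in U -> all (fun p => p.1 \in U) e.1.2).

Definition prime_LOT (G : LOT) : Prop :=
  forall U : {set V}, subLOT G U -> U = setT \/ #|U| = 1.

(* word equality in W(Ups) = < V | x^2, (ab)^m for ({a,b},m) in Ups >:
   the congruence on words generated by the relators *)
Inductive weq (Ups : labgraph) : seq V -> seq V -> Prop :=
| weq_refl s : weq Ups s s
| weq_sym s t : weq Ups s t -> weq Ups t s
| weq_trans s t u : weq Ups s t -> weq Ups t u -> weq Ups s u
| weq_sq u v x : weq Ups (u ++ x :: x :: v) (u ++ v)
| weq_cox u v a b m : (a, b, m) \in Ups ->
    weq Ups (u ++ alt_pow a b m ++ v) (u ++ v).

End LOT.

From mathcomp Require Import all_boot.
From mathcomp Require Import zify.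

Set Implicit Arguments. Unset Strict Implicit. Unset Printing Implicit Defensive.

(* Label the edge {x, y} with odd label m = 2k + 1 by w = (prod_{z <> x, y} z^2) (yx)^k.
   Modulo squares of generators the relator x w y w^-1 becomes x (yx)^k y (xy)^k = (xy)^m,
   so the edge is of Coxeter type with Coxeter label m, and r_e is trivial in W.  Every
   vertex other than x and y occurs in w, so a subLOT containing an edge contains all
   vertices: the LOT is prime. *)

Section AlternatingWords.
Variable V : finType.
Implicit Types x y : V.

Lemma alt_powS x y n : alt_pow x y n.+1 = x :: y :: alt_pow x y n.
Proof. by []. Qed.

Lemma alt_pow_add x y a b : alt_pow x y (a + b) = alt_pow x y a ++ alt_pow x y b.
Proof. by rewrite /alt_pow nseqD flatten_cat. Qed.

Lemma alt_powSr x y n : alt_pow x y n.+1 = alt_pow x y n ++ [:: x; y].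
Proof. by rewrite -addn1 alt_pow_add. Qed.

Lemma cons_alt_pow x y n : x :: alt_pow y x n = alt_pow x y n ++ [:: x].
Proof. by elim: n => [|n IHn] //; rewrite !alt_powS /= -IHn. Qed.

Lemma rev_alt_pow x y n : rev (alt_pow x y n) = alt_pow y x n.
Proof.
elim: n => [|n IHn] //.
by rewrite alt_powS !rev_cons IHn alt_powSr -!cats1 -catA.
Qed.

Lemma rot1_alt_pow x y n : rot 1 (alt_pow x y n) = alt_pow y x n.
Proof.
case: n => [|n] //.
by rewrite alt_powS rot1_cons rcons_cons -cats1 -cons_alt_pow.
Qed.

Lemma last_alt_pow x y n d : last d (alt_pow x y n.+1) = y.
Proof. by elim: n d => [|n IHn] d //; rewrite alt_powS; apply: IHn. Qed.

Lemma alt_pow_subset x y n : {subset alt_pow x y n <= [:: x; y]}.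
Proof.
move=> z; elim: n => [|n IHn] //.
by rewrite alt_powS !inE in IHn * => /or3P[-> | -> | /IHn]; rewrite ?orbT.
Qed.

Lemma alt_pow_odd x y k :
  x :: alt_pow y x k ++ y :: rev (alt_pow y x k) = alt_pow x y k.*2.+1.
Proof.
rewrite rev_alt_pow -cat_cons cons_alt_pow -catA /=.
by rewrite -addnn -addnS alt_pow_add alt_powS.
Qed.

End AlternatingWords.

Section SquaresOfGenerators.
Variable V : finType.
Implicit Types (z : V) (s t : seq V).

Definition squares s : seq V := flatten [seq [:: z; z] | z <- s].

Lemma squares_cons z s t : squares (z :: s) ++ t = [:: z, z & squares s ++ t].
Proof. by []. Qed.

Lemma squares_cat s t : squares (s ++ t) = squares s ++ squares t.
Proof. by rewrite /squares map_cat flatten_cat. Qed.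

Lemma rev_squares s : rev (squares s) = squares (rev s).
Proof.
elim: s => [|z s IHs] //.
by rewrite -[squares _]cats0 squares_cons cats0 !rev_cons IHs -!cats1 squares_cat -catA.
Qed.

Lemma mem_squares s : squares s =i s.
Proof.
move=> z; elim: s => [|a s IHs] //.
by rewrite -[squares _]cats0 squares_cons cats0 !inE IHs orbA orbb.
Qed.

Lemma weq_cat_squares (Ups : labgraph V) u v s : weq Ups (u ++ squares s ++ v) (u ++ v).
Proof.
elim: s => [|z s IHs]; first exact: weq_refl.
by apply: weq_trans IHs; rewrite squares_cons; apply: weq_sq.
Qed.

End SquaresOfGenerators.

Section FreeReduction.
Variable V : finType.
Implicit Types (x y z : V) (s t : seq V).

Definition zreduced s := sorted (fun a b : V => a != b) s.

Lemma zreduced_alt_pow x y n : x != y -> zreduced (alt_pow x y n).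
Proof.
move=> neq_xy; apply: (@path_sorted _ _ y).
elim: n => [|n IHn] //.
by rewrite alt_powS /= eq_sym neq_xy.
Qed.

Lemma zred_cons a t : zred (a :: t) =
  if zred t is b :: u then (if a == b then u else [:: a, b & u]) else [:: a].
Proof. by []. Qed.

Lemma zreduced_zred s : zreduced (zred s).
Proof.
elim: s => [|a t] //=; case: (zred t) => [|b u] // red_bu.
case: ifP => [_ | /negbT neq_ab]; last by rewrite /zreduced /= neq_ab.
by case: u red_bu => //= c u /andP[].
Qed.

Lemma zred_id s : zreduced s -> zred s = s.
Proof.
elim: s => [|a [|b u] IHs] // /andP[neq_ab red_bu].
by rewrite zred_cons IHs // (negbTE neq_ab).
Qed.

Lemma zred_catr p t : zred (p ++ t) = zred (p ++ zred t).
Proof.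
elim: p => [|a p IHp]; first by rewrite [RHS]zred_id // zreduced_zred.
by rewrite !cat_cons zred_cons IHp -zred_cons.
Qed.

Lemma zred_sq z t : zred [:: z, z & t] = zred t.
Proof.
rewrite !zred_cons; have := zreduced_zred t.
case: (zred t) => [|b u] /=; first by rewrite eqxx.
case: (eqVneq z b) => [<- | neq_zb] red_bu; last by rewrite eqxx.
by case: u red_bu => [|c u] //= /andP[/negbTE->].
Qed.

Lemma zred_cat_squares p s t : zred (p ++ squares s ++ t) = zred (p ++ t).
Proof.
rewrite zred_catr [RHS]zred_catr; congr zred; congr (_ ++ _).
by elim: s => [|z s IHs] //; rewrite squares_cons zred_sq.
Qed.

Lemma cycred_zred s : cycred (zred s) = cycred s.
Proof. by rewrite /cycred (zred_id (zreduced_zred s)). Qed.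

Lemma cycred_id_alt_pow x y n : x != y -> cycred (alt_pow x y n) = alt_pow x y n.
Proof.
move=> neq_xy; rewrite /cycred zred_id ?zreduced_alt_pow //.
case: n => [|n] //; rewrite [in cyc_aux _ _]alt_powS /=.
have -> : last y (alt_pow x y n) = y by case: n => [|n] //; apply: last_alt_pow.
by rewrite (negbTE neq_xy).
Qed.

End FreeReduction.

Section Runs.
Variable V : finType.
Implicit Types (z : V) (s t : seq V).

Lemma runs_cons a t : runs (a :: t) =
  if runs t is (b, k) :: r then
    (if a == b then (a, k.+1) :: r else (a, 1) :: (b, k) :: r)
  else [:: (a, 1)].
Proof. by []. Qed.

Lemma runs_head a t : exists k r, runs (a :: t) = (a, k) :: r.
Proof.
rewrite runs_cons; case: (runs t) => [|[b k] r]; first by exists 1, [::].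
by case: ifP => _; eauto.
Qed.

Lemma runs_sq z t : ohead t != Some z -> runs [:: z, z & t] = (z, 2) :: runs t.
Proof.
case: t => [|b u] neq_bz; first by rewrite /= eqxx.
have [k [r runs_bu]] := runs_head b u.
have neq_zb : (z == b) = false by apply/eqP=> eq_zb; rewrite eq_zb eqxx in neq_bz.
by rewrite runs_cons (runs_cons z (b :: u)) runs_bu neq_zb eqxx.
Qed.

Lemma all_runs (Q : pred V) t : all Q t -> all (fun p => Q p.1) (runs t).
Proof.
elim: t => [|a t IHt] // /andP[Qa /IHt]; rewrite runs_cons.
case: (runs t) => [|[b k] r] /=; first by rewrite Qa.
by case: ifP => _ /andP[Qb Qr] /=; rewrite Qa ?Qb Qr.
Qed.

Lemma runs_squares s t : uniq s -> {in s, forall z, z \notin t} ->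
  runs (squares s ++ t) = [seq (z, 2) | z <- s] ++ runs t.
Proof.
elim: s => [|z s IHs] // /andP[z_notin_s uniq_s] s_notin_t.
rewrite squares_cons runs_sq; last first.
  case: s {IHs uniq_s} z_notin_s s_notin_t => [|a s] /=; last first.
    by rewrite inE negb_or eq_sym => /andP[].
  move=> _ /(_ z (mem_head _ _)); case: t => [|b u] //=.
  by rewrite inE negb_or eq_sym => /andP[neq_bz _]; apply: contra neq_bz => /eqP[->].
by rewrite IHs // => a s_a; apply: s_notin_t; rewrite inE s_a orbT.
Qed.

End Runs.

Section TreeEdges.
Variable V : finType.
Implicit Types (es : seq (V * V)) (r : V -> V).

Lemma card_imset_merge (A : {set V}) r merge c d :
  (forall v, merge v = if r v == r d then r c else r v) ->
  #|r @: A| <= #|merge @: A| + (c != d).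
Proof.
case: (eqVneq c d) => [<- | _] merge_def /=.
  by rewrite addn0 (eq_imset (g := r)) // => v; rewrite merge_def; case: eqP => [-> |].
rewrite addn1; apply: (@leq_trans #|r d |: merge @: A|); last first.
  by rewrite cardsU1 addnC -addn1 leq_add2l leq_b1.
apply: subset_leq_card; apply/subsetP => _ /imsetP[v Av ->].
rewrite !inE; case: (eqVneq (r v) (r d)) => [-> | neq_v]; rewrite ?eqxx //.
by apply/orP; right; apply/imsetP; exists v; rewrite // merge_def (negbTE neq_v).
Qed.

Lemma adj_invariant_labelling es : exists r,
  (forall u v, adj es u v -> r u = r v) /\
  #|V| <= #|r @: [set: V]| + count (fun p : V * V => p.1 != p.2) es.
Proof.
elim: es => [|[c d] es [r [r_adj card_r]]].
  by exists id; split=> //; rewrite card_imset // cardsT addn0.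
exists (fun v => if r v == r d then r c else r v); split.
  move=> u v; rewrite /adj !inE.
  case: (eqVneq (u, v) (c, d)) => [[-> ->] _ | _]; first by rewrite eqxx; case: ifP.
  case: (eqVneq (v, u) (c, d)) => [[-> ->] _ | _]; first by rewrite eqxx; case: ifP.
  by move=> /r_adj ->.
by rewrite /= addnA (leq_trans card_r) // leq_add2r (card_imset_merge _ (fun _ => erefl)).
Qed.

(* A loop would leave only |V| - 2 non-loop edges to connect the |V| vertices. *)
Lemma tree_no_loop es : is_tree es -> forall c d, (c, d) \in es -> c != d.
Proof.
move=> [V_gt0 [size_es connected]] c d es_cd; apply/eqP => eq_cd; subst d.
have [r [r_adj card_r]] := adj_invariant_labelling es.
have r_const v : r v = r c.
  have closed_r : closed (adj es) [pred u | r u == r c].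
    by move=> u w /r_adj r_uw; rewrite !inE r_uw.
  by have := closed_connect closed_r (connected v c); rewrite !inE eqxx => /eqP.
have image_r : #|r @: [set: V]| <= 1.
  rewrite -(cards1 (r c)); apply: subset_leq_card.
  by apply/subsetP => _ /imsetP[v _ ->]; rewrite r_const inE.
have loop_c : 0 < count (predC (fun p : V * V => p.1 != p.2)) es.
  by rewrite -has_count; apply/hasP; exists (c, c); rewrite //= eqxx.
have := count_predC (fun p : V * V => p.1 != p.2) es.
lia.
Qed.

End TreeEdges.

Section PrimeLOT.
Variable V : finType.

Lemma prime_of_full_labels (G : LOT V) :
  (forall e, e \in G -> forall v, v != e.1.1 -> v != e.2 -> v \in map fst e.1.2) ->
  prime_LOT G.
Proof.
move=> full U [/set0Pn[a Ua] [connU closedU]].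
have edge_fills : forall e, e \in G -> e.1.1 \in U -> e.2 \in U -> U = setT.
  move=> e Ge Ux Uy; apply/setP => v; rewrite inE.
  case: (eqVneq v e.1.1) => [-> // | neq_vx]; case: (eqVneq v e.2) => [-> // | neq_vy].
  have /mapP[p w_p ->] := full e Ge v neq_vx neq_vy.
  exact: allP (closedU e Ge Ux Uy) p w_p.
case: (pickP [pred b | (b \in U) && (b != a)]) => [b /andP[Ub neq_ba] | only_a].
  left; case/connectP: (connU a b Ua Ub) => [[|c p]] /=.
    by move=> _ eq_ba; rewrite eq_ba eqxx in neq_ba.
  case/andP=> /and3P[_ Uc adj_ac] _ _.
  by case/orP: adj_ac => /mapP[e Ge [ex ey]]; apply: (edge_fills e Ge); rewrite -?ex -?ey.
right; suff -> : U = [set a] by rewrite cards1.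
apply/setP => b; rewrite inE; apply/idP/eqP => [Ub | -> //].
by apply/eqP; move: (only_a b); rewrite /= Ub => /negbFE.
Qed.

End PrimeLOT.

Section CoxeterLOT.
Variable V : finType.
Implicit Types (x y : V) (m : nat).

Definition other_vertices x y := [seq z <- enum V | (z != x) && (z != y)].

Definition coxeter_label x y m : seq V :=
  squares (other_vertices x y) ++ alt_pow y x m./2.

Definition coxeter_edge (f : V * V * nat) : V * word V * V :=
  (f.1.1, [seq (z, true) | z <- coxeter_label f.1.1 f.1.2 f.2], f.1.2).

Definition coxeter_lot (Ups : labgraph V) : LOT V := map coxeter_edge Ups.

Lemma lot_ends_coxeter_lot Ups : lot_ends (coxeter_lot Ups) = lab_ends Ups.
Proof. by rewrite /lot_ends -map_comp; apply: eq_map => -[[x y] m]. Qed.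

Lemma coxeter_edge_letters x y m :
  map fst (coxeter_edge (x, y, m)).1.2 = coxeter_label x y m.
Proof. by rewrite -map_comp map_id. Qed.

Lemma mem_coxeter_label x y m v : v != x -> v != y -> v \in coxeter_label x y m.
Proof.
by move=> neq_vx neq_vy; rewrite mem_cat mem_squares mem_filter neq_vx neq_vy mem_enum.
Qed.

Lemma coxeter_type_coxeter_edge x y m : coxeter_type_edge (coxeter_edge (x, y, m)).
Proof.
have uniq_others : uniq (other_vertices x y) by rewrite filter_uniq ?enum_uniq.
have others_notin : {in other_vertices x y, forall z, z \notin alt_pow y x m./2}.
  move=> z; rewrite mem_filter => /andP[/andP[neq_zx neq_zy] _].
  by apply/negP => /alt_pow_subset; rewrite !inE (negbTE neq_zx) (negbTE neq_zy).
rewrite /coxeter_type_edge coxeter_edge_letters runs_squares //.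
rewrite all_cat all_map; apply/andP; split; first by apply/allP => z; rewrite /= orbT.
apply: sub_all (all_runs (Q := mem [:: y; x]) _); last by apply/allP/alt_pow_subset.
by case=> z k /=; rewrite !inE => /orP[] ->; rewrite ?orbT.
Qed.

(* Bracketed twice as u ++ squares s ++ v, the shape removed by [zred_cat_squares]
   and [weq_cat_squares]. *)
Lemma rel_letters_coxeter_edge x y m :
  rel_letters (coxeter_edge (x, y, m)) =
  [:: x] ++ squares (other_vertices x y) ++
  ((alt_pow y x m./2 ++ y :: rev (alt_pow y x m./2)) ++
   squares (rev (other_vertices x y)) ++ [::]).
Proof.
by rewrite /rel_letters coxeter_edge_letters /coxeter_label rev_cat rev_squares cats0 -!catA.
Qed.

Lemma alt_pow_half x y m : odd m ->
  [:: x] ++ (alt_pow y x m./2 ++ y :: rev (alt_pow y x m./2)) = alt_pow x y m.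
Proof. by move=> odd_m; rewrite -[in RHS](odd_double_half m) odd_m add1n -alt_pow_odd. Qed.

Lemma zred_coxeter_relator x y m : x != y -> odd m ->
  zred (rel_letters (coxeter_edge (x, y, m))) = alt_pow x y m.
Proof.
move=> neq_xy odd_m; rewrite rel_letters_coxeter_edge zred_cat_squares catA.
by rewrite zred_cat_squares cats0 alt_pow_half // zred_id // zreduced_alt_pow.
Qed.

Lemma reduces_coxeter_edge x y m : x != y -> odd m ->
  reduces_to (coxeter_edge (x, y, m)) m.
Proof.
move=> neq_xy odd_m; exists 1.
rewrite -cycred_zred zred_coxeter_relator // cycred_id_alt_pow //.
exact: rot1_alt_pow.
Qed.

Lemma weq_coxeter_relator (Ups : labgraph V) x y m : (x, y, m) \in Ups -> odd m ->
  weq Ups (rel_letters (coxeter_edge (x, y, m))) [::].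
Proof.
move=> Ups_xym odd_m; rewrite rel_letters_coxeter_edge.
apply: weq_trans (weq_cat_squares _ _ _ _) _; rewrite catA.
apply: weq_trans (weq_cat_squares _ _ _ _) _; rewrite cats0 alt_pow_half //.
by have := weq_cox [::] [::] Ups_xym; rewrite cats0.
Qed.

End CoxeterLOT.

Theorem lemma2p4 (V : finType) (Ups : labgraph V) :
  is_tree (lab_ends Ups) ->
  (forall f, f \in Ups -> odd f.2) ->
  exists G : LOT V,
    [/\ is_tree (lot_ends G),
        (forall e, e \in G -> coxeter_type_edge e),
        prime_LOT G,
        coxeter_tree_of G Ups &
        (* G(G) -> W(Ups), x |-> x, is well defined (each relator r_e is
           trivial in W(Ups), where x^{-1} = x); it is onto as the image
           contains all generators *)
        (forall e, e \in G -> weq Ups (rel_letters e) [::])].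
Proof.
move=> tree_Ups odd_Ups; exists (coxeter_lot Ups); split.
- by rewrite lot_ends_coxeter_lot.
- by move=> _ /mapP[[[x y] m] _ ->]; apply: coxeter_type_coxeter_edge.
- apply: prime_of_full_labels => _ /mapP[[[x y] m] _ ->] v neq_vx neq_vy.
  by rewrite coxeter_edge_letters mem_coxeter_label.
- split=> [_ /mapP[[[x y] m] Ups_xym ->] | f Ups_f].
    exists m; split; first by left.
    apply: reduces_coxeter_edge; last exact: odd_Ups Ups_xym.
    by apply: tree_no_loop tree_Ups _ _ _; apply/mapP; exists (x, y, m).
  by exists (coxeter_edge f); split; [apply: map_f | left].
- move=> _ /mapP[[[x y] m] Ups_xym ->].
  exact: weq_coxeter_relator Ups_xym (odd_Ups _ Ups_xym).
Qed.
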